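(* Let $\mathcal{N}$ be a 2-step nilpotent Lie algebra over $\mathbb{R}$ whose commutator ideal $\mathcal{Z}=[\mathcal{N},\mathcal{N}]$ coincides with its center, and let $\mathcal{V}$ be a subspace with $\mathcal{N}=\mathcal{V}\oplus\mathcal{Z}$. Let $q\ge2$ and assume there is an $\mathbb{R}$-basis $Y_1,\dots,Y_q$ of $\mathcal{V}$ such that $\{[Y_1,Y_j]: j=2,\dots,q\}$ is linearly independent. Let $f:\mathcal{N}\to\mathcal{N}$ be a Lie ring homomorphism with $f(\mathcal{V})\subseteq\mathcal{V}$. Then: (A) if $f$ is a Lie ring automorphism and $f(\mathcal{V})=\mathcal{V}$, then $f$ is a Lie algebra automorphism; (B) if there is an $\mathbb{R}$-basis $X_1,\dots,X_q$ of $\mathcal{V}$ with $f(X_1)=Y_1$ and $f([X_1,X_j])\neq0$ for all $j=2,\dots,q$, then $f$ is a Lie algebra homomorphism. In particular, $\mathcal{N}$ satisfies the partial automatic continuity, and for every Lie ring automorphism $f$ of $\mathcal{N}$ there exist a central automorphism $\mu$ and a Lie algebra automorphism $\overline{f}$ of $\mathcal{N}$ such that $f=\mu\circ\overline{f}$.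
   Context: A Lie ring homomorphism between real Lie algebras is an additive map preserving the Lie bracket (not assumed $\mathbb{R}$-linear); a Lie ring automorphism is a bijective Lie ring homomorphism of a Lie algebra onto itself. A Lie algebra homomorphism/automorphism is an $\mathbb{R}$-linear one. A central automorphism of a Lie algebra $\mathcal{N}$ with center $\mathfrak{z}$ is a Lie ring automorphism $f$ with $f(x)-x\in\mathfrak{z}$ for all $x$. Field automorphisms of $\mathcal{N}$: if $\mathcal{N}=\mathcal{N}_1\oplus\cdots\oplus\mathcal{N}_k$ (ideals), for each $\mathcal{N}_i$ that is the realification of a complex Lie algebra choose a $\mathbb{C}$-basis $e_1,\dots,e_m$ and a field automorphism $\varphi$ of $\mathbb{C}$ fixing the structure constants and set $\sigma_i(\sum x_le_l)=\sum\varphi(x_l)e_l$, otherwise $\sigma_i=\mathrm{id}$; $\sigma_1\times\cdots\times\sigma_k$ is a field automorphism. $\mathcal{N}$ satisfies the partial automatic continuity if every Lie ring automorphism is a composition $\mu\circ\overline{f}\circ\sigma$ of a central automorphism, a Lie algebra automorphism and a field automorphism. *)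

From HB Require Import structures.
From mathcomp Require Import all_boot all_order all_algebra.
From mathcomp Require Import reals.
From mathcomp.real_closed Require Import complex.
Set Implicit Arguments. Unset Strict Implicit. Unset Printing Implicit Defensive.
Import Order.TTheory GRing.Theory Num.Theory.
Local Open Scope ring_scope.

Section LieDefs.
Variables (R : realType) (L : vectType R) (br : L -> L -> L).

Definition lie_bracket : Prop :=
  [/\ (forall (a : R) x y z, br (a *: x + y) z = a *: br x z + br y z),
      (forall (a : R) x y z, br x (a *: y + z) = a *: br x y + br x z),
      (forall x, br x x = 0) &
      (forall x y z, br x (br y z) + br y (br z x) + br z (br x y) = 0)].

Definition two_step_nilpotent : Prop :=
  (forall x y z, br x (br y z) = 0) /\ exists x y, br x y != 0.

Definition is_center (Z : {vspace L}) : Prop :=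
  forall z, z \in Z <-> (forall x, br z x = 0).

Definition is_derived (Z : {vspace L}) : Prop :=
  (forall x y, br x y \in Z) /\
  (forall W : {vspace L}, (forall x y, br x y \in W) -> (Z <= W)%VS).

Definition lie_ring_hom (f : L -> L) : Prop :=
  (forall x y, f (x + y) = f x + f y) /\ (forall x y, f (br x y) = br (f x) (f y)).

Definition lie_ring_aut (f : L -> L) : Prop := lie_ring_hom f /\ bijective f.

Definition lie_alg_hom (f : L -> L) : Prop :=
  lie_ring_hom f /\ (forall (a : R) x, f (a *: x) = a *: f x).

Definition lie_alg_aut (f : L -> L) : Prop := lie_alg_hom f /\ bijective f.

Definition central_aut (f : L -> L) : Prop :=
  lie_ring_aut f /\ (forall x y, br (f x - x) y = 0).

(* J is a complex structure on the ideal W making W (with br) the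
   realification of a complex Lie algebra *)
Definition complex_structure (W : {vspace L}) (J : L -> L) : Prop :=
  [/\ (forall (a : R) x y, J (a *: x + y) = a *: J x + J y),
      (forall x, x \in W -> J x \in W),
      (forall x, x \in W -> J (J x) = - x) &
      (forall x y, x \in W -> y \in W -> br (J x) y = J (br x y))].

Definition cscale (J : L -> L) (z : R[i]) (x : L) : L := ((@complex.Re R z) *: x) + ((@complex.Im R z) *: J x).

Definition csum (J : L -> L) (m : nat) (c : 'I_m -> R[i]) (e : 'I_m -> L) : L :=
  \sum_(l < m) cscale J (c l) (e l).

Definition cbasis (W : {vspace L}) (J : L -> L) (m : nat) (e : 'I_m -> L) : Prop :=
  [/\ (forall l, e l \in W),
      (forall x, x \in W -> exists c : 'I_m -> R[i], x = csum J c e) &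
      (forall c c' : 'I_m -> R[i], csum J c e = csum J c' e -> forall l, c l = c' l)].

(* the admissible maps sigma_i on an ideal W: either the identity, or
   (W a realification) the map induced by a field automorphism phi of C
   fixing the structure constants w.r.t. a C-basis.  (For a realification,
   the identity is the case phi = id, so this matches the paper.) *)
Definition component_field_aut (W : {vspace L}) (s : L -> L) : Prop :=
  (forall x, x \in W -> s x = x) \/
  exists (J : L -> L) (m : nat) (e : 'I_m -> L) (phi : {rmorphism R[i] -> R[i]}),
    [/\ bijective phi, complex_structure W J, cbasis W J e,
        (forall (a b : 'I_m) (c : 'I_m -> R[i]),
            br (e a) (e b) = csum J c e -> forall l, phi (c l) = c l) &
        (forall c : 'I_m -> R[i], s (csum J c e) = csum J (fun l => phi (c l)) e)].

(* field automorphism of N: product of component maps along a direct-sum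
   decomposition of N into ideals *)
Definition field_aut (sigma : L -> L) : Prop :=
  exists (k : nat) (Ns : 'I_k -> {vspace L}),
    [/\ (forall i x y, y \in Ns i -> br x y \in Ns i),
        directv (\sum_(i < k) Ns i),
        (\sum_(i < k) Ns i)%VS = fullv &
        exists sig : 'I_k -> L -> L,
          (forall i, component_field_aut (Ns i) (sig i)) /\
          (forall x : 'I_k -> L, (forall i, x i \in Ns i) ->
             sigma (\sum_(i < k) x i) = \sum_(i < k) sig i (x i))].

Definition partial_automatic_continuity : Prop :=
  forall f, lie_ring_aut f ->
    exists (mu g sigma : L -> L),
      [/\ central_aut mu, lie_alg_aut g, field_aut sigma &
          f =1 mu \o g \o sigma].

End LieDefs.

From HB Require Import structures.
From mathcomp Require Import all_boot all_order all_algebra.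
From mathcomp Require Import reals.
From mathcomp.real_closed Require Import complex.
Set Implicit Arguments.
Unset Strict Implicit.
Unset Printing Implicit Defensive.

Import Order.TTheory GRing.Theory Num.Theory.
Local Open Scope ring_scope.

(* Let [Y0] be the first basis vector of [V]. As the brackets [[Y0, Yj]],
   [j >= 1], are independent, the centralizer of [Y0] in [V] is the line
   [R Y0]. If [f] preserves [V] and [f X0 = Y0], then [f (t X0)] commutes
   with [Y0], so [f (t X0) = phi t Y0]; comparing with [f [t w, w] = 0] gives
   [f (t w) = phi t f w] on all of [V], as soon as some [f [X0, u]] is nonzero.
   Then [phi] is a ring endomorphism of [R], hence the identity, so [f] is
   linear on [V], hence on brackets, hence on [Z = [N, N]].
   A Lie ring automorphism [f] becomes [V]-stable once the central-valued map
   [x |-> Z-component of f (V-component of x)] is subtracted; the resulting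
   [g] is linear by the above, and [f o g^-1] is a central automorphism. *)

Lemma rmorph_real_id {R : realType} (phi : {rmorphism R -> R}) : phi =1 id.
Proof.
have phi_le x y : x <= y -> phi x <= phi y.
  rewrite -subr_ge0 => /sqr_sqrtr yx.
  by rewrite -subr_ge0 -rmorphB -yx rmorphXn sqr_ge0.
move=> x; case: (ltgtP (phi x) x) => //.
- case/rat_in_itvoo=> r; rewrite in_itv /= => /andP[lo hi].
  by have := phi_le _ _ (ltW hi); rewrite fmorph_rat => /(lt_le_trans lo); rewrite ltxx.
- case/rat_in_itvoo=> r; rewrite in_itv /= => /andP[lo hi].
  by have := phi_le _ _ (ltW lo); rewrite fmorph_rat => /(lt_le_trans hi); rewrite ltxx.
Qed.

Section RealRingEndomorphism.
Variables (R : realType) (phi : R -> R).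
Hypotheses (phiD : {morph phi : x y / x + y}) (phiM : {morph phi : x y / x * y}).
Hypothesis phi1 : phi 1 = 1.

Local Definition phi_rmorphism := phi.
Let phi0 : phi 0 = 0. Proof. by apply: (addrI (phi 0)); rewrite -phiD !addr0. Qed.
HB.instance Definition _ := GRing.isNmodMorphism.Build R R phi_rmorphism (phi0, phiD).
HB.instance Definition _ := GRing.isMonoidMorphism.Build R R phi_rmorphism (phi1, phiM).

Lemma ring_endo_real_id : phi =1 id.
Proof. exact: (rmorph_real_id phi_rmorphism). Qed.

End RealRingEndomorphism.

Section Additive.
Variables (U W : zmodType) (f : U -> W).
Hypothesis fD : {morph f : x y / x + y}.

Lemma additive0 : f 0 = 0.
Proof. by apply: (addrI (f 0)); rewrite -fD !addr0. Qed.

Lemma additiveB x y : f (x - y) = f x - f y.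
Proof.
have fN z : f (- z) = - f z by apply: (addrI (f z)); rewrite -fD !subrr additive0.
by rewrite fD fN.
Qed.

Lemma additive_inj : (forall x, f x = 0 -> x = 0) -> injective f.
Proof.
move=> ker0 x y fxy; apply/eqP; rewrite -subr_eq0; apply/eqP/ker0.
by rewrite additiveB fxy subrr.
Qed.

End Additive.

Lemma inj_surj_bij (T : choiceType) (U : eqType) (g : T -> U) :
  injective g -> (forall y, exists x, g x = y) -> bijective g.
Proof.
move=> g_inj g_surj.
have g_surjb y : exists x, g x == y by have [x <-] := g_surj y; exists x.
exists (fun y => xchoose (g_surjb y)) => [x|y]; last exact/eqP/(xchooseP (g_surjb y)).
exact/g_inj/eqP/(xchooseP (g_surjb (g x))).
Qed.

Lemma vline_coord (K : fieldType) (vT : vectType K) (u v : vT) :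
  v \in <[u]>%VS -> v = coord [tuple u] ord0 v *: u.
Proof. by rewrite -span_seq1 => /coord_span {1}->; rewrite big_ord1. Qed.

Lemma scalerIv (K : fieldType) (V : lmodType K) (v : V) :
  v != 0 -> injective ( *:%R^~ v).
Proof.
move=> v_neq0 a b /eqP; rewrite -subr_eq0 -scalerBl scaler_eq0 (negPf v_neq0) orbF.
by rewrite subr_eq0 => /eqP.
Qed.

Lemma mem_basis_nth (K : fieldType) (vT : vectType K) (U : {vspace vT}) m
    (X : m.-tuple vT) i :
  basis_of U X -> (i < m)%N -> X`_i \in U.
Proof. by move=> /basis_mem X_U lt_i_m; rewrite X_U // mem_nth ?size_tuple. Qed.

Section LieRing.
Variables (R : realType) (L : vectType R) (br : L -> L -> L).
Hypothesis br_lie : lie_bracket br.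

Lemma brDl x y z : br (x + y) z = br x z + br y z.
Proof. by case: br_lie => brl _ _ _; have := brl 1 x y z; rewrite !scale1r. Qed.

Lemma brDr x y z : br x (y + z) = br x y + br x z.
Proof. by case: br_lie => _ brr _ _; have := brr 1 x y z; rewrite !scale1r. Qed.

Lemma br0l x : br 0 x = 0.
Proof. by apply: (addrI (br 0 x)); rewrite -brDl !addr0. Qed.

Lemma br0r x : br x 0 = 0.
Proof. by apply: (addrI (br x 0)); rewrite -brDr !addr0. Qed.

Lemma brZl a x y : br (a *: x) y = a *: br x y.
Proof. by case: br_lie => brl _ _ _; have := brl a x 0 y; rewrite !addr0 br0l addr0. Qed.

Lemma brZr a x y : br x (a *: y) = a *: br x y.
Proof. by case: br_lie => _ brr _ _; have := brr a x y 0; rewrite !addr0 br0r addr0. Qed.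

Lemma brxx x : br x x = 0.
Proof. by case: br_lie. Qed.

Lemma brBl x y z : br (x - y) z = br x z - br y z.
Proof. by rewrite brDl -scaleN1r brZl scaleN1r. Qed.

Lemma brBr x y z : br x (y - z) = br x y - br x z.
Proof. by rewrite brDr -scaleN1r brZr scaleN1r. Qed.

Lemma brC x y : br x y = - br y x.
Proof.
have := brxx (x + y); rewrite !brDl !brDr !brxx add0r addr0 => /eqP.
by rewrite addr_eq0 => /eqP.
Qed.

Lemma brsuml I r (P : pred I) (F : I -> L) y :
  br (\sum_(i <- r | P i) F i) y = \sum_(i <- r | P i) br (F i) y.
Proof. exact: (big_morph (br^~ y) (fun a b => brDl a b y) (br0l y)). Qed.

Lemma brsumr I r (P : pred I) (F : I -> L) x :
  br x (\sum_(i <- r | P i) F i) = \sum_(i <- r | P i) br x (F i).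
Proof. exact: (big_morph (br x) (brDr x) (br0r x)). Qed.

Lemma derived_ind (Z : {vspace L}) (P : L -> Prop) : is_derived br Z ->
    P 0 -> (forall x y, P x -> P y -> P (x + y)) ->
    (forall a x, P x -> P (a *: x)) -> (forall x y, P (br x y)) ->
  forall z, z \in Z -> P z.
Proof.
move=> [_ Z_min] P0 PD PZ Pbr z zZ.
pose b := vbasis (fullv : {vspace L}).
pose s := [seq br x y | x <- (b : seq L), y <- (b : seq L)].
have br_s x y : br x y \in <<s>>%VS.
  have /andP[/eqP span_b _] := vbasisP (fullv : {vspace L}).
  have /coord_span -> : x \in <<b>>%VS by rewrite span_b memvf.
  have /coord_span -> : y \in <<b>>%VS by rewrite span_b memvf.
  rewrite brsuml; apply: memv_suml => i _; rewrite brZl brsumr memvZ //.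
  apply: memv_suml => j _; rewrite brZr memvZ // memv_span //.
  by apply: allpairs_f; apply: mem_nth; rewrite size_tuple.
have /coord_span -> : z \in <<in_tuple s>>%VS by apply: subvP (Z_min _ br_s) z zZ.
elim/big_ind: _ => //= i _; apply: PZ.
have : (in_tuple s)`_i \in s by apply: mem_nth; rewrite /= ltn_ord.
by case/allpairsP => [[x y] [_ _ ->]].
Qed.

Lemma field_aut_id : field_aut br id.
Proof.
exists 1%N, (fun=> fullv); split.
- by move=> i x y _; rewrite memvf.
- by rewrite directvE /= !big_ord1.
- by rewrite big_ord1.
- by exists (fun=> id); split=> // i; left.
Qed.

Lemma lie_ring_hom_comp f g :
  lie_ring_hom br f -> lie_ring_hom br g -> lie_ring_hom br (f \o g).
Proof. by move=> [fD fbr] [gD gbr]; split=> x y /=; rewrite ?gD ?fD ?gbr ?fbr. Qed.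

Lemma lie_ring_hom_can f g :
  lie_ring_hom br f -> cancel f g -> cancel g f -> lie_ring_hom br g.
Proof.
move=> [fD fbr] fK gK; split=> x y; apply: (can_inj fK); first by rewrite fD !gK.
by rewrite fbr !gK.
Qed.

Lemma lie_ring_hom_center (Z : {vspace L}) f g :
  is_center br Z -> lie_ring_hom br f -> cancel g f -> forall z, z \in Z -> f z \in Z.
Proof.
move=> Zcenter [fD fbr] gK z zZ; apply/Zcenter => y.
by rewrite -(gK y) -fbr ((Zcenter z).1 zZ) (additive0 fD).
Qed.

Lemma centralizer_first_vline (V : {vspace L}) n (Y : n.+2.-tuple L) :
    basis_of V Y -> free [seq br Y`_0 Y`_j | j <- iota 1 n.+1] ->
  forall v, v \in V -> br Y`_0 v = 0 -> v \in <[Y`_0]>%VS.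
Proof.
move=> /andP[/eqP span_Y _] freeY v vV Y0v.
have /coord_span vE : v \in <<Y>>%VS by rewrite span_Y.
pose T := [tuple br Y`_0 Y`_(lift ord0 i) | i < n.+1].
have freeT : free T.
  suff -> : (T : seq L) = [seq br Y`_0 Y`_j | j <- iota 1 n.+1] by [].
  apply: (@eq_from_nth _ 0); first by rewrite size_tuple size_map size_iota.
  move=> i; rewrite size_tuple => lt_i_n.
  rewrite (nth_map 0%N) ?size_iota // nth_iota //.
  by rewrite -[T`_i]/(T`_(Ordinal lt_i_n)) nth_mktuple.
have coord0 i : coord Y (lift ord0 i) v = 0.
  move: i; move/freeP: freeT; apply; transitivity (br Y`_0 v); last exact: Y0v.
  rewrite [in RHS]vE brsumr [in RHS]big_ord_recl brZr brxx scaler0 add0r.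
  by apply: eq_bigr => i _; rewrite brZr nth_mktuple.
apply/vlineP; exists (coord Y ord0 v).
by rewrite {1}vE big_ord_recl big1 ?addr0 // => i _; rewrite coord0 scale0r.
Qed.

Section Scalability.
Variables (V Z : {vspace L}) (f : L -> L) (X0 Y0 u : L).
Hypotheses (Zcenter : is_center br Z) (Zderived : is_derived br Z).
Hypothesis VZ_full : (V + Z)%VS = fullv.
Hypotheses (f_hom : lie_ring_hom br f) (fV : forall v, v \in V -> f v \in V).
Hypothesis centralizerY0 : forall v, v \in V -> br Y0 v = 0 -> v \in <[Y0]>%VS.
Hypotheses (X0V : X0 \in V) (fX0 : f X0 = Y0).
Hypotheses (uV : u \in V) (f_X0u : f (br X0 u) != 0).

Let fD : {morph f : x y / x + y}. Proof. exact: f_hom.1. Qed.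
Let fbr x y : f (br x y) = br (f x) (f y). Proof. exact: f_hom.2. Qed.
Let f0 : f 0 = 0. Proof. exact: additive0 fD. Qed.

Let f_brX0 w : f (br X0 w) = br Y0 (f w). Proof. by rewrite fbr fX0. Qed.

Let Y0_neq0 : Y0 != 0.
Proof. by apply: contra f_X0u => /eqP Y0_0; rewrite f_brX0 Y0_0 br0l. Qed.

Let phi t := coord [tuple Y0] ord0 (f (t *: X0)).

Let f_scaleX0 t : f (t *: X0) = phi t *: Y0.
Proof.
apply/vline_coord/centralizerY0; first by rewrite fV ?memvZ.
by rewrite -fX0 -fbr brZr brxx scaler0 f0.
Qed.

(* The defect [f (t w) - phi t f w] commutes with [Y0], so it is a multiple
   [c Y0]; bracketing with [f w] and using [[t w, w] = 0] gives [c = 0]. *)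
Let f_scaleV_nondeg w t :
  w \in V -> f (br X0 w) != 0 -> f (t *: w) = phi t *: f w.
Proof.
move=> wV f_X0w; set d := f (t *: w) - phi t *: f w.
have /vlineP[c d_eq] : d \in <[Y0]>%VS.
  apply: centralizerY0; first by rewrite memvB ?memvZ ?fV ?memvZ.
  by rewrite brBr brZr -f_brX0 brZr -brZl fbr f_scaleX0 brZl subrr.
have f_tw : f (t *: w) = c *: Y0 + phi t *: f w by rewrite -d_eq subrK.
suff c0 : c = 0 by rewrite f_tw c0 scale0r add0r.
have : f (br (t *: w) w) = 0 by rewrite brZl brxx scaler0 f0.
rewrite fbr f_tw brDl !brZl brxx scaler0 addr0 -f_brX0 => /eqP.
by rewrite scaler_eq0 (negPf f_X0w) orbF => /eqP.
Qed.

Let f_scaleV w t : w \in V -> f (t *: w) = phi t *: f w.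
Proof.
move=> wV; have [f_X0w0|] := eqVneq (f (br X0 w)) 0; last exact: f_scaleV_nondeg.
have f_X0wu : f (br X0 (w + u)) != 0 by rewrite brDr fD f_X0w0 add0r.
have := f_scaleV_nondeg t (memvD wV uV) f_X0wu.
by rewrite scalerDr !fD (f_scaleV_nondeg t uV f_X0u) scalerDr => /addIr.
Qed.

Let phiD : {morph phi : s t / s + t}.
Proof.
move=> s t; apply: (scalerIv Y0_neq0) => /=.
by rewrite scalerDl -!f_scaleX0 -fD scalerDl.
Qed.

Let phiM : {morph phi : s t / s * t}.
Proof.
move=> s t; have brE : br (s *: X0) (t *: u) = br ((s * t) *: X0) u.
  by rewrite !brZl brZr scalerA.
move/(congr1 f): brE; rewrite !fbr !f_scaleX0 f_scaleV //.
by rewrite brZl brZr scalerA brZl -f_brX0 => /(scalerIv f_X0u).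
Qed.

Let phi1 : phi 1 = 1.
Proof. by apply: (scalerIv Y0_neq0); rewrite /= -f_scaleX0 !scale1r. Qed.

Let f_linearV w t : w \in V -> f (t *: w) = t *: f w.
Proof. by move=> wV; rewrite f_scaleV // (ring_endo_real_id phiD phiM phi1). Qed.

Let f_linear_br x y t : f (t *: br x y) = t *: f (br x y).
Proof.
have /memv_addP[v vV [z zZ ->]] : x \in (V + Z)%VS by rewrite VZ_full memvf.
by rewrite brDl ((Zcenter z).1 zZ) addr0 -brZl !fbr f_linearV // brZl.
Qed.

Let f_linearZ z t : z \in Z -> f (t *: z) = t *: f z.
Proof.
move=> zZ; move: z zZ t.
apply: (derived_ind (P := fun z => forall t, f (t *: z) = t *: f z)) => //.
- by move=> t; rewrite scaler0 f0 scaler0.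
- by move=> x y fx fy t; rewrite scalerDr !fD fx fy scalerDr.
- by move=> a x fx t; rewrite scalerA !fx scalerA.
Qed.

Lemma lie_ring_hom_scalable t x : f (t *: x) = t *: f x.
Proof.
have /memv_addP[v vV [z zZ ->]] : x \in (V + Z)%VS by rewrite VZ_full memvf.
by rewrite scalerDr !fD f_linearV // f_linearZ // scalerDr.
Qed.

End Scalability.

Section FirstBasisVector.
Variables (V Z : {vspace L}) (n : nat) (Y : n.+2.-tuple L).
Hypotheses (Zcenter : is_center br Z) (Zderived : is_derived br Z).
Hypothesis VZ_full : (V + Z)%VS = fullv.
Hypothesis basisY : basis_of V Y.
Hypothesis freeY : free [seq br Y`_0 Y`_j | j <- iota 1 n.+1].

Let centralizerY0 := centralizer_first_vline basisY freeY.

Lemma stable_lie_ring_aut_linear f :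
    (forall v, v \in V -> f v \in V) -> lie_ring_aut br f ->
    (forall v, v \in V -> exists2 w, w \in V & f w = v) ->
  lie_alg_aut br f.
Proof.
move=> fV [f_hom f_bij] f_ontoV; split=> //; split=> //.
have [X0 X0V fX0] := f_ontoV _ (mem_basis_nth (i := 0) basisY isT).
have [u uV fu] := f_ontoV _ (mem_basis_nth (i := 1) basisY isT).
apply: (lie_ring_hom_scalable Zcenter Zderived VZ_full f_hom fV centralizerY0
          X0V fX0 uV).
rewrite f_hom.2 fX0 fu; apply: (free_not0 freeY).
by apply/mapP; exists 1%N.
Qed.

Lemma lie_ring_hom_first_basis_linear f (X : n.+2.-tuple L) :
    lie_ring_hom br f -> (forall v, v \in V -> f v \in V) ->
    basis_of V X -> f X`_0 = Y`_0 ->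
    (forall j, (1 <= j < n.+2)%N -> f (br X`_0 X`_j) != 0) ->
  lie_alg_hom br f.
Proof.
move=> f_hom fV basisX fX0 f_X0X; split=> //.
apply: (lie_ring_hom_scalable Zcenter Zderived VZ_full f_hom fV centralizerY0
          (mem_basis_nth (i := 0) basisX isT) fX0 (mem_basis_nth (i := 1) basisX isT)).
exact: f_X0X.
Qed.

Section CentralDecomposition.
Hypothesis VZ_direct : (V :&: Z)%VS = 0%VS.
Variables f finv : L -> L.
Hypotheses (f_hom : lie_ring_hom br f) (fK : cancel f finv) (finvK : cancel finv f).

Local Notation pV := (daddv_pi V Z).
Local Notation pZ := (daddv_pi Z V).

Let fD : {morph f : x y / x + y}. Proof. exact: f_hom.1. Qed.
Let f0 : f 0 = 0. Proof. exact: additive0 fD. Qed.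
Let fZ z : z \in Z -> f z \in Z.
Proof. exact: lie_ring_hom_center Zcenter f_hom finvK z. Qed.

Let finvZ z : z \in Z -> finv z \in Z.
Proof. exact: lie_ring_hom_center Zcenter (lie_ring_hom_can f_hom fK finvK) fK z. Qed.

Let br_centerl z x : z \in Z -> br z x = 0.
Proof. by move=> zZ; apply: (Zcenter z).1. Qed.

Let br_centerr z x : z \in Z -> br x z = 0.
Proof. by move=> zZ; rewrite brC br_centerl ?oppr0. Qed.

Let ZV_direct : (Z :&: V = 0)%VS. Proof. by rewrite capvC. Qed.

Let pV_add_pZ x : pV x + pZ x = x.
Proof. by apply: daddv_pi_add; rewrite // VZ_full memvf. Qed.

Let pV_sub_pZ x : x - pZ x = pV x.
Proof. by rewrite -{1}(pV_add_pZ x) addrK. Qed.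

Let pV_Z z : z \in Z -> pV z = 0.
Proof. by move=> zZ; rewrite -pV_sub_pZ (daddv_pi_id ZV_direct zZ) subrr. Qed.

(* [g := f - h] keeps only the [V]-component of [f] on [V]: it is [V]-stable,
   and [f - g = h] takes central values. *)
Let h x := pZ (f (pV x)).
Let g x := f x - h x.

Let hZ x : h x \in Z. Proof. exact: memv_pi. Qed.
Let h_Z z : z \in Z -> h z = 0. Proof. by move=> zZ; rewrite /h pV_Z // f0 raddf0. Qed.

Let gD : {morph g : x y / x + y}.
Proof. by move=> x y; rewrite /g /h raddfD !fD raddfD opprD addrACA. Qed.

Let g_hom : lie_ring_hom br g.
Proof.
split=> // x y; rewrite /g (h_Z (Zderived.1 x y)) subr0 f_hom.2.
by rewrite brBl brBr (br_centerl _ (hZ x)) (br_centerr _ (hZ y)) !subr0.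
Qed.

Let gV v : v \in V -> g v = pV (f v).
Proof. by move=> vV; rewrite /g /h (daddv_pi_id VZ_direct vV) pV_sub_pZ. Qed.

Let g_stableV v : v \in V -> g v \in V.
Proof. by move=> vV; rewrite gV // memv_pi. Qed.

Let g_ontoV w : w \in V -> exists2 v, v \in V & g v = w.
Proof.
move=> wV; have pV_finvw : pV (finv w) \in V by exact: memv_pi.
exists (pV (finv w)) => //; rewrite gV // -(pV_sub_pZ (finv w)) (additiveB fD) finvK.
by rewrite raddfB /= (daddv_pi_id VZ_direct wV) pV_Z ?subr0 // fZ // memv_pi.
Qed.

Let g_surj y : exists x, g x = y.
Proof.
have [v _ gv] := g_ontoV (memv_pi V Z y).
have pZy_Z : finv (pZ y) \in Z by rewrite finvZ // memv_pi.
by exists (v + finv (pZ y)); rewrite gD gv /g h_Z // finvK subr0 pV_add_pZ.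
Qed.

Let g_inj : injective g.
Proof.
apply: (additive_inj gD) => d /eqP; rewrite subr_eq0 => /eqP fd.
have dZ : d \in Z by rewrite -(fK d) finvZ // fd hZ.
by apply: (can_inj fK); rewrite fd h_Z // f0.
Qed.

Lemma central_decomposition_can :
  exists mu g, [/\ central_aut br mu, lie_alg_aut br g & f =1 mu \o g].
Proof.
have g_bij : bijective g := inj_surj_bij g_inj g_surj.
have g_aut := stable_lie_ring_aut_linear g_stableV (conj g_hom g_bij) g_ontoV.
have [ginv gK ginvK] := g_bij.
exists (f \o ginv), g; split=> // [|x]; last by rewrite /= gK.
split; first split.
- exact: lie_ring_hom_comp f_hom (lie_ring_hom_can g_hom gK ginvK).
- exact: bij_comp (Bijective fK finvK) (Bijective ginvK gK).
- move=> x y /=; rewrite -{2}(ginvK x) /g opprB addrC subrK.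
  exact: br_centerl (hZ _).
Qed.

End CentralDecomposition.

Lemma lie_ring_aut_central_decomposition f :
    (V :&: Z)%VS = 0%VS -> lie_ring_aut br f ->
  exists mu g, [/\ central_aut br mu, lie_alg_aut br g & f =1 mu \o g].
Proof.
by move=> VZ_direct [f_hom [finv fK finvK]]; exact: central_decomposition_can fK finvK.
Qed.

End FirstBasisVector.

End LieRing.

Theorem lemma3p1 (R : realType) (L : vectType R) (br : L -> L -> L)
  (V Z : {vspace L}) (q : nat) (Y : q.-tuple L) :
  lie_bracket br -> two_step_nilpotent br ->
  is_derived br Z -> is_center br Z ->
  (V + Z)%VS = fullv -> (V :&: Z)%VS = 0%VS ->
  (2 <= q)%N -> basis_of V Y ->
  free [seq br Y`_0 Y`_j | j <- iota 1 q.-1] ->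
  (forall f : L -> L, lie_ring_hom br f -> (forall v, v \in V -> f v \in V) ->
     (* (A) *)
     (lie_ring_aut br f -> (forall v, v \in V -> exists2 w, w \in V & f w = v) ->
        lie_alg_aut br f) /\
     (* (B) *)
     (forall X : q.-tuple L, basis_of V X -> f X`_0 = Y`_0 ->
        (forall j, (1 <= j < q)%N -> f (br X`_0 X`_j) != 0) ->
        lie_alg_hom br f)) /\
  partial_automatic_continuity br /\
  (forall f : L -> L, lie_ring_aut br f ->
     exists mu g : L -> L, [/\ central_aut br mu, lie_alg_aut br g & f =1 mu \o g]).
Proof.
move=> br_lie _ Zderived Zcenter VZ_full VZ_direct.
case: q Y => [|[|n]] Y // _ basisY freeY.
have decompose f := lie_ring_aut_central_decomposition br_lie Zcenter Zderived
  VZ_full basisY freeY (f := f) VZ_direct.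
split; [|split].
- move=> f f_hom fV; split=> [f_aut f_ontoV | X basisX fX0 f_X0X].
    exact (stable_lie_ring_aut_linear br_lie Zcenter Zderived VZ_full basisY freeY
      fV f_aut f_ontoV).
  exact (lie_ring_hom_first_basis_linear br_lie Zcenter Zderived VZ_full basisY freeY
    f_hom fV basisX fX0 f_X0X).
- move=> f /decompose[mu [g [mu_central g_aut fE]]].
  by exists mu, g, id; split=> //; exact: field_aut_id.
- exact: decompose.
Qed.
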